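(* Let $n\in\mathbf{N}$ and $A\subset[n]$ have property P, with $Z^{1(2)}_{(\frac29,\frac13]}$, $Z_B$, $Z_G$, $Z_{(\frac13,\frac12]}$ as in the context. Define $$B_3=2\cdot\big(Z^{1(2)}_{(\frac29,\frac13]}\cup Z_B\cup Z_G\big)\ \cup\ Z_{(\frac13,\frac12]}\ \cup\ \tfrac94\cdot Z_B\ \cup\ \big(A\cap(\tfrac n2,\tfrac{2n}{3}]\big),$$ and $A'''=\{m\in\mathbf{N}:3m\in A_{(\frac12,1]}+A_{(\frac12,1]}\}$ where $A_{(\frac12,1]}=A\cap(\frac n2,n]$. Then $B_3$ is a set of integers contained in $(\frac n3,\frac{2n}{3}]$, $|B_3|=\left|A\cap[1,\frac{2n}{3}]\right|+|Z_B|$, and $B_3\cap A'''=\emptyset$.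
   Context: A set $A\subset\mathbf{N}$ has property P if there are no $x,y,z\in A$ (not necessarily distinct $x,y$) with $z<x$, $z<y$ and $z\mid x+y$. Intervals denote sets of integers. For $a\in A\cap[1,\frac n2]$ let $m_a\geqslant0$ be the unique integer with $3^{m_a}a\in(\frac n6,\frac n2]$. Define $Z=\{3^{m_a}a: a\in A\cap[1,\frac n2],\ 3^{m_a}a\in(\frac{2n}{9},\frac n2]\}\cup\{2\cdot3^{m_a}a: a\in A\cap[1,\frac n2],\ 3^{m_a}a\in(\frac n6,\frac{2n}{9}]\}$. Let $Z^{1(2)}_{(\frac29,\frac13]}=Z\cap(\frac{2n}{9},\frac n3]\cap(1+2\mathbf{Z})$; $Z_B=\{z\in Z\cap(\frac{2n}{9},\frac n3]\cap2\mathbf{Z}:\frac{3z}{2}\in Z\}$; $Z_G=\{z\in Z\cap(\frac{2n}{9},\frac n3]\cap2\mathbf{Z}:\frac{3z}{2}\notin Z\}$; $Z_{(\frac13,\frac12]}=Z\cap(\frac n3,\frac n2]$. *)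

From HB Require Import structures.
From mathcomp Require Import all_boot all_order all_algebra finmap.
Set Implicit Arguments. Unset Strict Implicit. Unset Printing Implicit Defensive.
Import Order.TTheory GRing.Theory Num.Theory.
Local Open Scope fset_scope.

Definition propP (A : {fset nat}) : Prop :=
  forall x y z, x \in A -> y \in A -> z \in A ->
    (z < x)%N -> (z < y)%N -> ~~ (z %| x + y).

Definition in_16_12 (n x : nat) : bool := (n < 6 * x)%N && (2 * x <= n)%N.

(* m_a : the unique m >= 0 with 3^m a in (n/6, n/2]; for 1 <= a <= n/2 it
   is at most n, so it is found by a search over 0..n. *)
Definition m_a (n a : nat) : nat := find (fun m => in_16_12 n (3 ^ m * a)) (iota 0 n.+1).

Definition y_a (n a : nat) : nat := 3 ^ (m_a n a) * a.

Definition A_low (n : nat) (A : {fset nat}) : {fset nat} :=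
  [fset a in A | (1 <= a)%N && (2 * a <= n)%N].

Definition Zset (n : nat) (A : {fset nat}) : {fset nat} :=
  [fset y_a n a | a in A_low n A & (2 * n < 9 * y_a n a)%N]
  `|` [fset 2 * y_a n a | a in A_low n A & (9 * y_a n a <= 2 * n)%N].

Definition Z_29_13 (n : nat) (A : {fset nat}) : {fset nat} :=
  [fset z in Zset n A | (2 * n < 9 * z)%N && (3 * z <= n)%N].

Definition Z_odd (n : nat) (A : {fset nat}) : {fset nat} :=
  [fset z in Z_29_13 n A | odd z].

Definition Z_B (n : nat) (A : {fset nat}) : {fset nat} :=
  [fset z in Z_29_13 n A | ~~ odd z & (3 * z./2 \in Zset n A)].

Definition Z_G (n : nat) (A : {fset nat}) : {fset nat} :=
  [fset z in Z_29_13 n A | ~~ odd z & (3 * z./2 \notin Zset n A)].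

Definition Z_13_12 (n : nat) (A : {fset nat}) : {fset nat} :=
  [fset z in Zset n A | (n < 3 * z)%N && (2 * z <= n)%N].

Local Open Scope ring_scope.

(* B_3, as a finite set of rationals (9/4 * Z_B is a priori rational). *)
Definition B3 (n : nat) (A : {fset nat}) : {fset rat} :=
  [fset ((2 * z)%N%:R : rat) | z in Z_odd n A `|` Z_B n A `|` Z_G n A]
  `|` [fset (z%:R : rat) | z in Z_13_12 n A]
  `|` [fset ((9%:R / 4%:R) * z%:R : rat) | z in Z_B n A]
  `|` [fset (a%:R : rat) | a in [fset a in A | (n < 2 * a)%N && (3 * a <= 2 * n)%N]].

Definition A_high (n : nat) (A : {fset nat}) : {fset nat} :=
  [fset a in A | (n < 2 * a)%N && (a <= n)%N].

Definition A3 (n : nat) (A : {fset nat}) (m : nat) : Prop :=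
  exists x y, x \in A_high n A /\ y \in A_high n A /\ (3 * m = x + y)%N.

(* Everything rests on one consequence of property P: if a, b are in A and
   a | 2b, then b <= a (take x = y = b and z = a).  Hence 3^i a = 3^j b
   forces a = b, and 2 * 3^i a = 3^j b is impossible for positive a, b in A.

   Z is the image of A /\ [1, n/2] under a |-> z_of n a (which is 3^m a or
   2 * 3^m a), a map that is injective by the facts above.  B_3 is the image
   in the rationals of the set of naturals
     B3_nat = 2 Z_(2/9,1/3]  U  Z_(1/3,1/2]  U  9/4 Z_B  U  A_(1/2,2/3],
   since 9z/4 = 3 y_a b is integral for z in Z_B.  Each element of B3_nat lies
   in (n/3, 2n/3] and is a multiple of an element of A, and no such multiple
   lies in A'''.  Finally the four pieces are pairwise disjoint, and their
   sizes add up to |A /\ [1, 2n/3]| + |Z_B|. *)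

From HB Require Import structures.
From mathcomp Require Import all_boot all_order all_algebra finmap zify.
Import Order.TTheory GRing.Theory Num.Theory.
Local Open Scope fset_scope.

Lemma pow3_cancel i k a b : 3 ^ (i + k) * a = 3 ^ i * b -> 3 ^ k * a = b.
Proof. by rewrite expnD -mulnA => /eqP; rewrite eqn_pmul2l ?expn_gt0 // => /eqP. Qed.

Lemma card_fsetU_disjoint (K : choiceType) (X Y : {fset K}) :
  [disjoint X & Y] -> #|` X `|` Y| = (#|` X| + #|` Y|)%N.
Proof. by move=> dXY; rewrite -cardfsUI disjoint_fsetI0 // cardfs0 addn0. Qed.

Lemma in_fset_sep (K : choiceType) (S : {fset K}) (P : pred K) (x : K) :
  (x \in [fset y in S | P y]) = (x \in S) && P x.
Proof. by rewrite inE. Qed.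

Section PropertyP.

Context {A : {fset nat}}.
Hypothesis hP : propP A.

Lemma propP_dvd_double {a b : nat} : a \in A -> b \in A -> a %| 2 * b -> b <= a.
Proof.
move=> aA bA dvd_ab; rewrite leqNgt; apply/negP => lt_ab.
by have := hP b b a bA bA aA lt_ab lt_ab; rewrite addnn -mul2n dvd_ab.
Qed.

Lemma pow3_eq_A (i j : nat) {a b : nat} :
  a \in A -> b \in A -> 3 ^ i * a = 3 ^ j * b -> a = b.
Proof.
wlog le_ij : i j a b / i <= j => [hwlog|] aA bA e.
  case: (leqP i j) => [|/ltnW] h; first exact: (hwlog i j).
  by symmetry; apply: (hwlog j i).
have ea : 3 ^ (j - i) * b = a by apply: (pow3_cancel i); rewrite subnKC.
have le_ab : a <= b.
  by apply: propP_dvd_double bA aA _; rewrite -ea dvdn_mull // dvdn_mull.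
by apply/eqP; rewrite eqn_leq le_ab -{1}ea leq_pmull ?expn_gt0.
Qed.

Lemma pow3_double_neq (i j : nat) {a b : nat} :
  0 < a -> 0 < b -> a \in A -> b \in A -> 2 * (3 ^ i * a) <> 3 ^ j * b.
Proof.
move=> a_gt0 b_gt0 aA bA e; case: (leqP j i) => [le_ji | lt_ij].
- have eb : 3 ^ (i - j) * (2 * a) = b.
    by apply: (pow3_cancel j); rewrite subnKC // -e mulnCA.
  have : b <= a.
    by apply: propP_dvd_double aA bA _; rewrite -eb !dvdn_mull.
  by have := leq_pmull (2 * a) (expn_gt0 3 (i - j)); rewrite eb; lia.
- have ea : 3 ^ (j - i) * b = 2 * a.
    by apply: (pow3_cancel i); rewrite subnKC ?(ltnW lt_ij) // -e mulnCA.
  have : a <= b.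
    by apply: propP_dvd_double bA aA _; rewrite -ea dvdn_mull.
  have : 3 * b <= 3 ^ (j - i) * b.
    by rewrite leq_mul2r -{1}(expn1 3) leq_pexp2l ?orbT // subn_gt0.
  by rewrite ea; lia.
Qed.

End PropertyP.

(* y_a n a is the representative 3^m a of a in (n/6, n/2]: the search in
   m_a succeeds since the largest m with 2 * 3^m a <= n is at most n. *)
Lemma y_aP {n a : nat} : 0 < a -> 2 * a <= n -> n < 6 * y_a n a /\ 2 * y_a n a <= n.
Proof.
move=> a_gt0 a_le.
have ex : exists m, 2 * (3 ^ m * a) <= n by exists 0; rewrite expn0 mul1n.
have ub m : 2 * (3 ^ m * a) <= n -> m <= n.
  by move=> h; have := ltn_expl m (isT : 1 < 3); nia.
case: (ex_maxnP ex ub) => m hm hmax.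
have hin : in_16_12 n (3 ^ m * a).
  have : ~~ (2 * (3 ^ m.+1 * a) <= n) by apply/negP => /hmax; rewrite ltnn.
  rewrite /in_16_12 expnS => hm1; apply/andP; split; lia.
have hh : has (fun m => in_16_12 n (3 ^ m * a)) (iota 0 n.+1).
  by apply/hasP; exists m => //; rewrite mem_iota /= add0n ltnS; exact: ub.
have := nth_find 0 hh.
rewrite nth_iota ?add0n; last by move: hh; rewrite has_find size_iota.
by rewrite /y_a /m_a /in_16_12 => /andP[].
Qed.

Definition z_of (n a : nat) : nat :=
  if 2 * n < 9 * y_a n a then y_a n a else 2 * y_a n a.

Lemma Zset_image (n : nat) (A : {fset nat}) :
  Zset n A = [fset z_of n a | a in A_low n A].
Proof.
apply/fsetP => z; rewrite in_fsetU; apply/orP/imfsetP => [[]|[a aL ->]].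
- by case/imfsetP => a /andP[aL big] ->; exists a; rewrite // /z_of big.
- by case/imfsetP => a /andP[aL small] ->; exists a; rewrite // /z_of ltnNge small.
- rewrite /z_of; case: ifP => big; [left | right]; apply/imfsetP; exists a => //.
  all: apply/andP; split => //; by rewrite leqNgt big.
Qed.

Lemma z_ofP {n a : nat} : 0 < a -> 2 * a <= n ->
  [/\ 2 * n < 9 * z_of n a, 2 * z_of n a <= n, a %| z_of n a
    & 3 * z_of n a <= n -> z_of n a = y_a n a].
Proof.
move=> a_gt0 a_le; have [lo hi] := y_aP a_gt0 a_le.
have a_dvd : a %| y_a n a by rewrite /y_a dvdn_mull.
rewrite /z_of; case: ifP => big; split => //; try lia.
by rewrite dvdn_mull.
Qed.

Lemma A_lowP (n : nat) (A : {fset nat}) (a : nat) :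
  a \in A_low n A = [&& a \in A, 0 < a & 2 * a <= n].
Proof. by rewrite inE. Qed.

(* The four pieces of B_3, as sets of naturals (9z/4 is integral for z in
   Z_B, see Z_BP), and their union. *)
Definition dbl_Zlow (n : nat) (A : {fset nat}) : {fset nat} :=
  [fset 2 * z | z in Z_29_13 n A].
Definition scaled_ZB (n : nat) (A : {fset nat}) : {fset nat} :=
  [fset 9 * z %/ 4 | z in Z_B n A].
Definition mid_A (n : nat) (A : {fset nat}) : {fset nat} :=
  [fset a in A | (n < 2 * a) && (3 * a <= 2 * n)].
Definition B3_nat (n : nat) (A : {fset nat}) : {fset nat} :=
  dbl_Zlow n A `|` Z_13_12 n A `|` scaled_ZB n A `|` mid_A n A.

Section Construction.

Context {n : nat} {A : {fset nat}}.
Hypothesis hP : propP A.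

Lemma Z_lowP z : z \in Z_29_13 n A ->
  exists2 a, a \in A_low n A & [/\ z = y_a n a, 2 * n < 9 * z & 3 * z <= n].
Proof.
rewrite inE Zset_image => /andP[/imfsetP [a aL ->] /andP[lo hi]].
move: (aL); rewrite A_lowP => /and3P[_ a_gt0 a_le].
have [_ _ _ ey] := z_ofP a_gt0 a_le.
by exists a; [exact: aL | split => //; exact: ey].
Qed.

Lemma Z_highP z : z \in Z_13_12 n A ->
  exists2 a, a \in A_low n A & [/\ z = z_of n a, n < 3 * z & 2 * z <= n].
Proof.
by rewrite inE Zset_image => /andP[/imfsetP [a aL ->] /andP[lo hi]]; exists a.
Qed.

(* z in Z_B means 3z/2 is again in Z; property P forces 3z/2 = 2 y_a b with
   y_a b in (n/6, 2n/9], since 3z/2 = y_a b would give 2 * 3^i b = 3^(j+1) a. *)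
Lemma Z_BP z : z \in Z_B n A ->
  exists2 b, b \in A_low n A & 3 * z = 4 * y_a n b /\ 9 * y_a n b <= 2 * n.
Proof.
rewrite inE => /andP[/Z_lowP [a aL [za _ _]] /andP[z_even]].
rewrite Zset_image => /imfsetP [b bL e3z]; exists b => //.
have ez := odd_double_half z; rewrite (negbTE z_even) add0n -mul2n in ez.
move: aL bL e3z; rewrite !A_lowP => /and3P[aA a_gt0 _] /and3P[bA b_gt0 _].
rewrite /z_of; case: ifP => big e3z; last by split; lia.
exfalso; apply: (pow3_double_neq hP (m_a n b) (m_a n a).+1 b_gt0 a_gt0 bA aA).
by rewrite expnS -mulnA -/(y_a n a) -/(y_a n b) -za -e3z; lia.
Qed.

Lemma dbl_ZlowP k : k \in dbl_Zlow n A ->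
  exists2 a, a \in A_low n A &
    [/\ k = 2 * y_a n a, 2 * n < 9 * y_a n a & 3 * y_a n a <= n].
Proof. by case/imfsetP => z /Z_lowP [a aL [-> lo hi]] ->; exists a. Qed.

Lemma scaled_ZBP k : k \in scaled_ZB n A ->
  exists2 b, b \in A_low n A & k = 3 * y_a n b /\ 9 * y_a n b <= 2 * n.
Proof.
by case/imfsetP => z /Z_BP [b bL [e3z le]] ->; exists b; [exact: bL | split; lia].
Qed.

Lemma mid_AP k : k \in mid_A n A = [&& k \in A, n < 2 * k & 3 * k <= 2 * n].
Proof. by rewrite inE. Qed.

Lemma Z_low_split : Z_odd n A `|` Z_B n A `|` Z_G n A = Z_29_13 n A.
Proof.
apply/fsetP => z; rewrite /Z_odd /Z_B /Z_G.
move: (Z_29_13 n A) (Zset n A) => Zlow Z; rewrite !inE.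
by case: (z \in Zlow); case: (odd z); case: (_ \in Z).
Qed.

Lemma B3_nat_range {k : nat} : k \in B3_nat n A -> n < 3 * k <= 2 * n.
Proof.
rewrite !in_fsetU -!orbA => /or4P[].
- by case/dbl_ZlowP => a _ [-> lo hi]; apply/andP; split; lia.
- by case/Z_highP => a _ [_ lo hi]; apply/andP; split; lia.
- case/scaled_ZBP => b; rewrite A_lowP => /and3P[_ b_gt0 b_le] [-> hi].
  by have [lo _] := y_aP b_gt0 b_le; apply/andP; split; lia.
- by rewrite mid_AP => /and3P[_ lo hi]; apply/andP; split; lia.
Qed.

Lemma B3_nat_divisor {k : nat} : k \in B3_nat n A -> exists2 d, d \in A & d %| k.
Proof.
rewrite !in_fsetU -!orbA => /or4P[].
- case/dbl_ZlowP => a; rewrite A_lowP => /and3P[aA _ _] [-> _ _].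
  by exists a; rewrite // /y_a !dvdn_mull.
- case/Z_highP => a; rewrite A_lowP => /and3P[aA a_gt0 a_le] [-> _ _].
  by have [_ _ a_dvd _] := z_ofP a_gt0 a_le; exists a.
- case/scaled_ZBP => b; rewrite A_lowP => /and3P[bA _ _] [-> _].
  by exists b; rewrite // /y_a !dvdn_mull.
- by rewrite mid_AP => /and3P[kA _ _]; exists k.
Qed.

(* A multiple k of an element d of A is not in A''': if 3k = x + y with x, y
   in A /\ (n/2, n], then d <= k forces d < x, y, and d | x + y violates P. *)
Lemma A3_no_divisor {k d : nat} : d \in A -> d %| k -> ~ A3 n A k.
Proof.
move=> dA dk [x [y [xH [yH e]]]].
move: xH yH; rewrite !inE => /andP[xA /andP[x_lo x_hi]] /andP[yA /andP[y_lo y_hi]].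
have d_le : d <= k by apply: dvdn_leq => //; lia.
have /negP := hP x y d xA yA dA ltac:(lia) ltac:(lia).
by apply; rewrite -e dvdn_mull.
Qed.

Lemma card_Zset : #|` Zset n A| = #|` A_low n A|.
Proof.
rewrite Zset_image; apply/eqP/card_in_imfsetP => a b.
rewrite !A_lowP => /and3P[aA a_gt0 _] /and3P[bA b_gt0 _].
rewrite /z_of; case: ifP => _; case: ifP => _ e.
- exact: (pow3_eq_A hP (m_a n a) (m_a n b) aA bA).
- by exfalso; apply: (pow3_double_neq hP _ _ b_gt0 a_gt0 bA aA (esym e)).
- by exfalso; apply: (pow3_double_neq hP _ _ a_gt0 b_gt0 aA bA e).
- apply: (pow3_eq_A hP (m_a n a) (m_a n b) aA bA).
  by rewrite -/(y_a n a) -/(y_a n b); lia.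
Qed.

Lemma card_dbl_Zlow : #|` dbl_Zlow n A| = #|` Z_29_13 n A|.
Proof. by apply/eqP/card_in_imfsetP => x y _ _; lia. Qed.

Lemma card_scaled_ZB : #|` scaled_ZB n A| = #|` Z_B n A|.
Proof.
apply/eqP/card_in_imfsetP => x y /Z_BP [b _ [ex _]] /Z_BP [c _ [ey _]]; lia.
Qed.

(* The four pieces are pairwise disjoint: equalities between them either
   contradict the ranges of the pieces or relate 2 * 3^i a to 3^j b. *)
Lemma disjoint_dbl_Zlow_Zhigh : [disjoint dbl_Zlow n A & Z_13_12 n A].
Proof.
apply/fdisjointP => k /dbl_ZlowP [a aL [ek lo hi]]; apply/negP.
case/Z_highP => b bL [ez _ _]; move: aL bL; rewrite !A_lowP.
move=> /and3P[aA a_gt0 _] /and3P[bA b_gt0 _]; move: ez; rewrite /z_of ek.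
case: ltnP => big e; last by lia.
exact: (pow3_double_neq hP _ _ a_gt0 b_gt0 aA bA e).
Qed.

Lemma disjoint_scaled_ZB : [disjoint dbl_Zlow n A `|` Z_13_12 n A & scaled_ZB n A].
Proof.
apply/fdisjointP => k kP; apply/negP => /scaled_ZBP [b bL [ek hi]].
move: bL; rewrite A_lowP => /and3P[bA b_gt0 b_le]; have [lo _] := y_aP b_gt0 b_le.
move: kP; rewrite in_fsetU.
case/orP => [/dbl_ZlowP [a aL [ek' _ _]] | /Z_highP [_ _ [_ _ k_le]]].
- move: aL; rewrite A_lowP => /and3P[aA a_gt0 _].
  apply: (pow3_double_neq hP (m_a n a) (m_a n b).+1 a_gt0 b_gt0 aA bA).
  by rewrite expnS -mulnA -/(y_a n a) -/(y_a n b) -ek -ek'.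
- lia.
Qed.

Lemma disjoint_mid_A :
  [disjoint dbl_Zlow n A `|` Z_13_12 n A `|` scaled_ZB n A & mid_A n A].
Proof.
apply/fdisjointP => k kP; apply/negP; rewrite mid_AP => /and3P[kA lo hi].
move: kP; rewrite !in_fsetU -orbA => /or3P[].
- case/dbl_ZlowP => a; rewrite A_lowP => /and3P[aA a_gt0 _] [ek _ _].
  apply: (pow3_double_neq hP (m_a n a) 0 a_gt0 _ aA kA); first lia.
  by rewrite expn0 mul1n -ek.
- by case/Z_highP => _ _ [_ _ k_le]; lia.
- case/scaled_ZBP => b; rewrite A_lowP => /and3P[bA b_gt0 _] [ek _].
  have b_dvd : b %| 2 * k by rewrite ek /y_a !dvdn_mull.
  have := propP_dvd_double hP bA kA b_dvd.
  by have := leq_pmull b (expn_gt0 3 (m_a n b)); rewrite -/(y_a n b); lia.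
Qed.

Lemma card_B3_nat : #|` B3_nat n A| =
  (#|` Z_29_13 n A| + #|` Z_13_12 n A| + #|` Z_B n A| + #|` mid_A n A|)%N.
Proof.
rewrite /B3_nat card_fsetU_disjoint ?disjoint_mid_A //.
rewrite card_fsetU_disjoint ?disjoint_scaled_ZB //.
by rewrite card_fsetU_disjoint ?disjoint_dbl_Zlow_Zhigh // card_dbl_Zlow card_scaled_ZB.
Qed.

Lemma card_Z_split : (#|` Z_29_13 n A| + #|` Z_13_12 n A|)%N = #|` Zset n A|.
Proof.
rewrite -card_fsetU_disjoint; last first.
  apply/fdisjointP => z; rewrite !inE => /and3P[_ _ hi].
  by apply/negP => /and3P[_ lo _]; lia.
congr #|` _|; apply/fsetP => z; rewrite /Z_29_13 /Z_13_12 in_fsetU !in_fset_sep.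
case: (boolP (z \in Zset n A)) => //= zZ; move: zZ; rewrite Zset_image.
case/imfsetP => a; rewrite A_lowP => /and3P[_ a_gt0 a_le] ->.
by have [lo hi _ _] := z_ofP a_gt0 a_le; case: (leqP (3 * z_of n a) n) => /= h; lia.
Qed.

Lemma card_A_low_mid :
  #|` [fset a in A | (1 <= a) && (3 * a <= 2 * n)]| =
  (#|` A_low n A| + #|` mid_A n A|)%N.
Proof.
rewrite -card_fsetU_disjoint; last first.
  apply/fdisjointP => a; rewrite A_lowP => /and3P[_ _ hi].
  by rewrite mid_AP; apply/negP => /and3P[_ lo _]; lia.
congr #|` _|; apply/fsetP => a; rewrite in_fsetU A_lowP mid_AP in_fset_sep.
by case: (a \in A) => //=; lia.
Qed.

Section RationalImage.

Local Open Scope ring_scope.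

(* B_3 is the image of B3_nat in the rationals; for z in Z_B the scaled
   element 9z/4 = 3 y_a b is an integer. *)
Lemma B3_natE : B3 n A = [fset (k%:R : rat) | k in B3_nat n A].
Proof.
rewrite /B3 /B3_nat Z_low_split !imfsetU /dbl_Zlow /scaled_ZB -!imfset_comp.
congr (_ `|` _ `|` _ `|` _); apply: eq_in_imfset => z zB /=.
have /Z_BP [b _ [e3z _]] : z \in Z_B n A by rewrite /Z_B in_fset.
have -> : (9 * z %/ 4)%N = (3 * y_a n b)%N by lia.
apply: (mulIf (_ : 4%:R != 0 :> rat)); first by rewrite pnatr_eq0.
by rewrite mulrAC divfK ?pnatr_eq0 // -!natrM; congr _%:R; lia.
Qed.

End RationalImage.

End Construction.

Local Open Scope ring_scope.

Theorem mainTheorem17 (n : nat) (A : {fset nat})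
  (hA : forall a, a \in A -> (1 <= a)%N && (a <= n)%N)
  (hP : propP A) :
  (forall x, x \in B3 n A ->
     x \is a Num.int /\ (n%:R / 3%:R < x) /\ (x <= 2%:R * n%:R / 3%:R))
  /\ #|` B3 n A| = (#|` [fset a in A | (1 <= a)%N && (3 * a <= 2 * n)%N]| + #|` Z_B n A|)%N
  /\ (forall m : nat, (m%:R : rat) \in B3 n A -> ~ A3 n A m).
Proof.
rewrite (B3_natE hP); split; [|split].
- move=> _ /imfsetP [k /= kB ->]; have /andP[lo hi] := B3_nat_range hP kB.
  split; first exact: natr_int.
  rewrite ltr_pdivrMr ?ler_pdivlMr ?ltr0n // -!natrM ltr_nat ler_nat.
  by split; rewrite mulnC.
- have -> : #|` [fset (k%:R : rat) | k in B3_nat n A]| = #|` B3_nat n A|.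
    by apply/eqP/card_in_imfsetP => x y _ _ /eqP; rewrite eqr_nat => /eqP.
  rewrite (card_B3_nat hP) card_A_low_mid -(card_Zset hP) -card_Z_split.
  lia.
- move=> m /imfsetP [k /= kB /eqP]; rewrite eqr_nat => /eqP ->.
  have [d dA dk] := B3_nat_divisor hP kB.
  exact: (A3_no_divisor hP dA dk).
Qed.
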